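(* Let $(X,\delta,\mu)\in\mathcal{N}(\widetilde\tau,c_1,c_2)$. Then for every $x\in X$, every $r>0$ and every $\varepsilon>0$, \[\mu\Bigl(B_\delta\bigl(x,\tfrac{(1+\varepsilon)c_2}{c_1}r\bigr)\setminus B_\delta(x,r)\Bigr)\geq\varepsilon c_2r>0.\]
   Context: $(X,\delta,\mu)\in\mathcal{N}(\widetilde\tau,c_1,c_2)$ means: $\delta$ is a quasi-distance on $X$ (nonnegative, symmetric, vanishing exactly on the diagonal, with $\delta(x,z)\leq\widetilde\tau[\delta(x,y)+\delta(y,z)]$), $\mu$ is a positive measure on a $\sigma$-algebra containing the $\delta$-balls $B_\delta(x,r)=\{y:\delta(x,y)<r\}$, $\mu(\{x\})=0$ for all $x$, $\mu(X)=+\infty$, and $0<c_1<c_2<\infty$ satisfy $c_1r\leq\mu(B_\delta(x,r))\leq c_2r$ for every $x\in X$ and $r>0$ (an unbounded non-atomic normal space of homogeneous type). *)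

From HB Require Import structures.
From mathcomp Require Import all_boot all_order all_algebra.
From mathcomp Require Import all_classical all_reals all_analysis.
Set Implicit Arguments. Unset Strict Implicit. Unset Printing Implicit Defensive.
Import Order.TTheory GRing.Theory Num.Theory.
Local Open Scope classical_set_scope.
Local Open Scope ring_scope.

Definition quasi_distance (R : realType) (X : Type) (tau : R) (delta : X -> X -> R) : Prop :=
  [/\ (forall x y, 0 <= delta x y),
      (forall x y, delta x y = delta y x),
      (forall x y, delta x y = 0 <-> x = y) &
      (forall x y z, delta x z <= tau * (delta x y + delta y z))].

Definition dball (R : realType) (X : Type) (delta : X -> X -> R) (x : X) (r : R) : set X :=
  [set y | delta x y < r].

Definition in_N (R : realType) (d : measure_display) (X : measurableType d)
  (delta : X -> X -> R) (mu : {measure set X -> \bar R}) (tau c1 c2 : R) : Prop :=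
  [/\ quasi_distance tau delta,
      (forall x r, measurable (dball delta x r)),
      (forall x, mu [set x] = 0%E),
      mu setT = +oo%E &
      [/\ 0 < c1, c1 < c2 &
          forall x r, 0 < r ->
            ((c1 * r)%:E <= mu (dball delta x r) <= (c2 * r)%:E)%E]].

From HB Require Import structures.
From mathcomp Require Import all_boot all_order all_algebra.
From mathcomp Require Import all_classical all_reals all_analysis.
From mathcomp Require Import ring.
Import Order.TTheory GRing.Theory Num.Theory.
Local Open Scope classical_set_scope.
Local Open Scope ring_scope.

(* The lower Ahlfors bound at radius s := (1 + eps) c2 / c1 * r gives
   mu (B(x, s)) >= c1 s = (1 + eps) c2 r, while the upper bound gives
   mu (B(x, r)) <= c2 r; the annulus therefore carries at least eps c2 r.
   Since mu (A `&` B) <= mu B, this needs no inclusion between the balls. *)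

Lemma measureD_lower_bound d (T : ringOfSetsType d) (R : realFieldType)
    (mu : {content set T -> \bar R}) (A B : set T) (a b : R) :
  measurable A -> measurable B ->
  (a%:E <= mu A)%E -> (mu B <= b%:E)%E -> ((a - b)%:E <= mu (A `\` B))%E.
Proof.
move=> mA mB muA_ge muB_le.
have muAB_le : (mu (A `&` B) <= b%:E)%E.
  exact: le_trans (measureIr _ mA mB) muB_le.
rewrite EFinB leeBlDr // (le_trans muA_ge) // (measureDI _ mA mB).
exact: leeD2l.
Qed.

Theorem lemma4p4 (R : realType) (d : measure_display) (X : measurableType d)
  (delta : X -> X -> R) (mu : {measure set X -> \bar R}) (tau c1 c2 : R) :
  in_N delta mu tau c1 c2 ->
  forall (x : X) (r eps : R), 0 < r -> 0 < eps ->
    ((eps * c2 * r)%:E <=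
       mu (dball delta x ((1 + eps) * c2 / c1 * r) `\` dball delta x r))%E /\
    0 < eps * c2 * r.
Proof.
move=> [_ mball _ _ [c1_gt0 c1_lt_c2 mu_ball]] x r eps r_gt0 eps_gt0.
have c2_gt0 : 0 < c2 := lt_trans c1_gt0 c1_lt_c2.
split; last by rewrite !mulr_gt0.
set s := (1 + eps) * c2 / c1 * r.
have s_gt0 : 0 < s by rewrite /s !(mulr_gt0, addr_gt0) ?invr_gt0.
have -> : eps * c2 * r = c1 * s - c2 * r.
  by rewrite /s; field; exact: lt0r_neq0.
apply: measureD_lower_bound => //.
- by have /andP[] := mu_ball x s s_gt0.
- by have /andP[] := mu_ball x r r_gt0.
Qed.
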